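(* Let $\tau$ be a signature with no function or constant symbols, and let $\varphi$ be a sentence of $\mathcal L_{\omega,\omega}(\tau)$. Let $T_\varphi:=\{\neg\,\vartheta_{\le n}(\varphi): n<\omega\}$, where each $\vartheta_{\le n}(\varphi)$ is taken as a first-order sentence of $\mathcal L_{\omega,\omega}(\tau)$ expressing it; thus $T_\varphi$ is a universal theory expressing that no submodel of size $\le n$, for any $n<\omega$, satisfies $\varphi$. Then the following are equivalent: (i) $\vartheta(\varphi)$ is expressible by a sentence of $\mathcal L_{\omega,\omega}(\tau)$; (ii) there is a $\Sigma^0_2$-sentence $\psi$ of $\mathcal L_{\omega,\omega}(\tau)$ such that $T_\varphi\vDash \varphi\leftrightarrow\psi$.
   Context: Models (structures) are nonempty. A submodel of a $\tau$-model $\mathfrak A$ is a substructure, i.e. a nonempty subset of the universe closed under the interpretations of all function and constant symbols of $\tau$, with the induced structure. $\mathcal L_{\omega,\omega}(\tau)$ is ordinary first-order logic with equality. For a sentence $\varphi$: $\mathfrak A\vDash\vartheta(\varphi)$ iff some submodel of $\mathfrak A$ satisfies $\varphi$. For a cardinal $n$, $\mathfrak A\vDash\vartheta_{\le n}(\varphi)$ iff some submodel of $\mathfrak A$ of cardinality $\le n$ satisfies $\varphi$. A property of $\tau$-models is expressible by a sentence $\chi$ if for every $\tau$-model $\mathfrak A$, $\mathfrak A$ has the property iff $\mathfrak A\vDash\chi$. A $\Sigma^0_2$-sentence is one in prenex form $\exists x_0\ldots\exists x_{k-1}\forall y_0\ldots\forall y_{l-1}\,\psi_0$ with $\psi_0$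 quantifier-free. *)

From Stdlib Require Import List.
From mathcomp Require Import ssreflect ssrfun ssrbool eqtype ssrnat fintype.




Section FOL.
Variable Rel : Type.
Variable ar : Rel -> nat.

(** Formulas, variables as de Bruijn indices (nat). *)
Inductive form : Type :=
| FFalse : form
| FEq : nat -> nat -> form
| FRel : forall R : Rel, ('I_(ar R) -> nat) -> form
| FNot : form -> form
| FAnd : form -> form -> form
| FOr : form -> form -> form
| FImp : form -> form -> form
| FEx : form -> form
| FAll : form -> form.

Fixpoint closed_at (n : nat) (f : form) : Prop :=
  match f with
  | FFalse => True
  | FEq i j => i < n /\ j < n
  | FRel R a => forall k, a k < n
  | FNot g => closed_at n g
  | FAnd g h | FOr g h | FImp g h => closed_at n g /\ closed_at n h
  | FEx g | FAll g => closed_at n.+1 g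
  end.

Definition sentence (f : form) : Prop := closed_at 0 f.

Fixpoint qfree (f : form) : Prop :=
  match f with
  | FFalse | FEq _ _ | FRel _ _ => True
  | FNot g => qfree g
  | FAnd g h | FOr g h | FImp g h => qfree g /\ qfree h
  | FEx _ | FAll _ => False
  end.

Fixpoint exs (k : nat) (f : form) : form :=
  match k with 0 => f | k'.+1 => FEx (exs k' f) end.
Fixpoint alls (k : nat) (f : form) : form :=
  match k with 0 => f | k'.+1 => FAll (alls k' f) end.

Definition sigma02 (f : form) : Prop :=
  exists k l g, qfree g /\ f = exs k (alls l g).

Record structure : Type := Structure {
  dom :> Type;
  dom_inhabited : inhabited dom;
  interp : forall R : Rel, ('I_(ar R) -> dom) -> Prop
}.

Definition scons {M : Type} (x : M) (e : nat -> M) : nat -> M :=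
  fun n => match n with 0 => x | n'.+1 => e n' end.

Fixpoint sat (M : structure) (e : nat -> dom M) (f : form) : Prop :=
  match f with
  | FFalse => False
  | FEq i j => e i = e j
  | FRel R a => @interp M R (fun k => e (a k))
  | FNot g => ~ sat M e g
  | FAnd g h => sat M e g /\ sat M e h
  | FOr g h => sat M e g \/ sat M e h
  | FImp g h => sat M e g -> sat M e h
  | FEx g => exists x : M, sat M (scons x e) g
  | FAll g => forall x : M, sat M (scons x e) g
  end.

(** M |= f for a sentence f (value independent of the assignment). *)
Definition models (M : structure) (f : form) : Prop :=
  forall e : nat -> M, sat M e f.

(** Submodels: since there are no function/constant symbols, a submodel is
    any nonempty subset of the universe with the induced structure. *)
Definition submodel (M : structure) (A : M -> Prop) (hA : exists x, A x)
  : structure :=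
  {| dom := {x : M | A x};
     dom_inhabited := let (x, Hx) := hA in inhabits (exist A x Hx);
     interp := fun R a => @interp M R (fun k => proj1_sig (a k)) |}.

Definition theta (phi : form) (M : structure) : Prop :=
  exists (A : M -> Prop) (hA : exists x, A x), models (submodel M A hA) phi.

Definition card_le (M : Type) (A : M -> Prop) (n : nat) : Prop :=
  exists l : list M, length l <= n /\ forall x, A x -> In x l.

Definition theta_le (phi : form) (n : nat) (M : structure) : Prop :=
  exists (A : M -> Prop) (hA : exists x, A x),
    card_le M A n /\ models (submodel M A hA) phi.

Definition expressible (P : structure -> Prop) : Prop :=
  exists chi : form, sentence chi /\ forall M, P M <-> models M chi.

Definition model_of_T (phi : form) (M : structure) : Prop :=
  forall n : nat, ~ theta_le phi n M.

End FOL.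
Arguments interp {Rel ar} s R _.
Arguments form {Rel} ar.
Arguments structure {Rel} ar.
Arguments sentence {Rel ar} f.
Arguments sigma02 {Rel ar} f.
Arguments models {Rel ar} M f.
Arguments theta {Rel ar} phi M.
Arguments expressible {Rel ar} P.
Arguments model_of_T {Rel ar} phi M.

(* If θ(φ) is expressed by a sentence χ, no model M of T_φ satisfies φ: M embeds
   into an ultraproduct of its finite submodels, which then satisfies θ(φ) and
   hence χ; by Łoś some finite submodel satisfies χ, i.e. θ(φ), so that
   M ⊨ θ_{≤n}(φ) for some n.  Thus T_φ ⊨ φ ↔ ⊥, and ⊥ is Σ⁰₂.
   Conversely, let ψ = ∃x̄ ∀ȳ ψ₀ be T_φ-equivalent to φ.  In a model of T_φ and φ,
   the finite submodel spanned by witnesses for x̄ still satisfies ψ and T_φ,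
   both being preserved by submodels, hence φ, contradicting T_φ.  So again no
   model of T_φ satisfies φ, and compactness (an ultraproduct of counterexamples
   of growing size) yields a uniform N with φ ⊨ θ_{≤N}(φ); then θ(φ) is
   expressed by the first-order sentence θ_{≤N}(φ). *)

From mathcomp Require Import ssreflect ssrfun ssrbool eqtype ssrnat fintype.
From mathcomp Require Import zify.
From Stdlib Require Import List Classical ClassicalEpsilon FunctionalExtensionality
  PropExtensionality ProofIrrelevance.
From mathcomp Require boolp classical_sets filter.

Record ultrafilter (I : Type) := Ultrafilter {
  uf_mem :> (I -> Prop) -> Prop;
  uf_setT : uf_mem (fun _ => True);
  uf_set0 : ~ uf_mem (fun _ => False);
  uf_setI : forall S T, uf_mem S -> uf_mem T -> uf_mem (fun i => S i /\ T i);
  uf_setS : forall S T : I -> Prop, uf_mem S -> (forall i, S i -> T i) -> uf_mem T;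
  uf_setVC : forall S, uf_mem S \/ uf_mem (fun i => ~ S i) }.
Arguments uf_setT {I} u.
Arguments uf_set0 {I} u.
Arguments uf_setI {I} u {S T}.
Arguments uf_setS {I} u {S T}.
Arguments uf_setVC {I} u S.

Module UltrafilterLemma.
Import boolp classical_sets filter.

Lemma ultrafilter_of_base (I : Type) (D : (I -> Prop) -> Prop) :
  (exists S, D S) ->
  (forall S T, D S -> D T -> exists R, D R /\ forall i, R i -> S i /\ T i) ->
  (forall S, D S -> exists i, S i) ->
  exists U : ultrafilter I, forall S, D S -> U S.
Proof.
move=> D_neq0 D_setI D_proper.
have F : Filter (filter_from D id).
  apply: filter_from_filter => // S T DS DT.
  have [R [DR sub]] := D_setI _ _ DS DT.
  by exists R => // x /sub[].
have PF : ProperFilter (filter_from D id).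
  by apply: filter_from_proper => S /D_proper.
have [G [UG subG]] := ultraFilterLemma PF.
have GF : ProperFilter G := ultra_proper.
unshelve eexists (@Ultrafilter I G _ _ _ _ _).
- exact: filterT.
- by move=> G0; apply: (@filter_not_empty _ G); apply: filterS G0.
- by move=> S T GS GT; apply: filterS (filterI GS GT) => x [].
- by move=> S T GS ST; apply: filterS GS.
- by move=> S; apply: in_ultra_setVsetC.
- by move=> S DS; apply: subG; exists S.
Qed.

End UltrafilterLemma.
Export UltrafilterLemma.

Section UltrafilterTheory.
Variables (I : Type) (U : ultrafilter I).

Lemma uf_nonempty S : U S -> exists i, S i.
Proof.
move=> US; apply: NNPP => nS; apply: (uf_set0 U); apply: (uf_setS U US) => i Si.
by apply: nS; exists i.
Qed.

Lemma uf_const (P : Prop) : U (fun _ => P) <-> P.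
Proof.
split; first by case/uf_nonempty.
by move=> p; apply: (uf_setS U (uf_setT U)).
Qed.

Lemma uf_setC S : U (fun i => ~ S i) <-> ~ U S.
Proof.
split; last by case: (uf_setVC U S).
move=> UnS US; apply: (uf_set0 U); apply: (uf_setS U (uf_setI U UnS US)).
by move=> i [].
Qed.

Lemma uf_bigI n (S : 'I_n -> I -> Prop) :
  (forall k, U (S k)) -> U (fun i => forall k, S k i).
Proof.
elim: n S => [|n IH] S US.
  by apply: (uf_setS U (uf_setT U)) => i _ [].
have Ulift := IH (fun k => S (lift ord_max k)) (fun k => US _).
apply: (uf_setS U (uf_setI U Ulift (US ord_max))) => i [Sl Smax] k.
by case: (unliftP ord_max k) => [k' ->|->].
Qed.

End UltrafilterTheory.
Arguments uf_nonempty {I} U {S}.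
Arguments uf_const {I} U P.
Arguments uf_setC {I} U S.
Arguments uf_bigI {I} U {n S}.

Lemma ultrafilter_final_segments : exists U : ultrafilter nat, forall n, U (fun i => n <= i).
Proof.
have [U UD] : exists U : ultrafilter nat,
    forall S : nat -> Prop, (exists n, S = fun i => n <= i) -> U S.
  apply: ultrafilter_of_base.
  - by exists (fun i => 0 <= i), 0.
  - move=> _ _ [n ->] [m ->]; exists (fun i => maxn n m <= i).
    by split=> [|i]; [exists (maxn n m) | rewrite geq_max => /andP].
  - by move=> _ [n ->]; exists n.
by exists U => n; apply: UD; exists n.
Qed.

Lemma ultrafilter_finite_subsets (T : Type) :
  exists U : ultrafilter (list T), forall x, U (fun l => In x l).
Proof.
have [U Uincl] : exists U : ultrafilter (list T),
    forall S, (exists l0, S = incl l0) -> U S.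
  apply: ultrafilter_of_base.
  - by exists (incl nil), nil.
  - move=> _ _ [l0 ->] [l1 ->]; exists (incl (l0 ++ l1)).
    split; first by exists (l0 ++ l1).
    by move=> l sub; split=> x x_in; apply: sub; apply/in_app_iff; [left|right].
  - by move=> _ [l0 ->]; exists l0.
exists U => x; apply: (uf_setS U (Uincl _ (ex_intro _ (x :: nil) erefl))) => l.
by apply; left.
Qed.

Arguments FFalse {Rel ar}. Arguments FEq {Rel ar}. Arguments FRel {Rel ar}.
Arguments FNot {Rel ar}. Arguments FAnd {Rel ar}. Arguments FOr {Rel ar}.
Arguments FImp {Rel ar}. Arguments FEx {Rel ar}. Arguments FAll {Rel ar}.
Arguments sat {Rel ar}. Arguments closed_at {Rel ar}. Arguments qfree {Rel ar}.
Arguments exs {Rel ar}. Arguments alls {Rel ar}. Arguments submodel {Rel ar}.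
Arguments theta_le {Rel ar}. Arguments dom_inhabited {Rel ar}.
Arguments Structure {Rel ar}.

Lemma proj1_sig_inj (A : Type) (P : A -> Prop) : injective (@proj1_sig A P).
Proof. exact: eq_sig_hprop (fun x => @proof_irrelevance (P x)). Qed.

Definition prefix_env {T : Type} (N : nat) (g e : nat -> T) : nat -> T :=
  fun n => if n < N then g n else e (n - N).

Lemma prefix_env0 {T : Type} (g e : nat -> T) : prefix_env 0 g e = e.
Proof. by apply: functional_extensionality => n; rewrite /prefix_env subn0. Qed.

Lemma prefix_env_scons {T : Type} N (g e : nat -> T) x :
  prefix_env N g (scons x e) = prefix_env N.+1 (fun n => if n < N then g n else x) e.
Proof.
apply: functional_extensionality => n; rewrite /prefix_env.
case: (ltngtP n N) => [lt_nN|lt_Nn|->]; last by rewrite leqnn subnn.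
- by rewrite ltnS ltnW.
- by rewrite ltnNge lt_Nn (_ : n - N = (n - N.+1).+1) //; lia.
Qed.

Lemma prefix_env_ext {T : Type} N (g g' e : nat -> T) :
  (forall n, n < N -> g n = g' n) -> prefix_env N g e = prefix_env N g' e.
Proof.
move=> gg'; apply: functional_extensionality => n; rewrite /prefix_env.
by case: ifP => // /gg' ->.
Qed.

Lemma prefix_env_last {T : Type} N (g e : nat -> T) :
  prefix_env N.+1 g e = prefix_env N.+1 (fun n => if n < N then g n else g N) e.
Proof.
apply: prefix_env_ext => n; rewrite ltnS leq_eqVlt.
by case/orP => [/eqP->|->]; rewrite ?ltnn.
Qed.

Section Semantics.
Context {Rel : Type} {ar : Rel -> nat}.
Notation form := (form ar).
Notation structure := (structure ar).
Implicit Types (M : structure) (f : form).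

Definition point M : M := epsilon (dom_inhabited M) (fun _ => True).

Lemma sat_closed_ext M f : forall d (e e' : nat -> M),
  closed_at d f -> (forall k, k < d -> e k = e' k) -> sat M e f <-> sat M e' f.
Proof.
have ext_scons d (e e' : nat -> M) x : (forall k, k < d -> e k = e' k) ->
    forall k, k < d.+1 -> scons x e k = scons x e' k.
  by move=> ee' [|k] //= /ee'.
elim: f => [|i j|R a|g IH|g IHg h IHh|g IHg h IHh|g IHg h IHh|g IH|g IH] d e e' /=.
- by [].
- by move=> [ci cj] ee'; rewrite (ee' _ ci) (ee' _ cj).
- move=> ca ee'.
  by rewrite (functional_extensionality _ (fun k => e' (a k)) (fun k => ee' _ (ca k))).
- by move=> c ee'; rewrite (IH d e e').
- by move=> [cg ch] ee'; rewrite (IHg d e e') // (IHh d e e').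
- by move=> [cg ch] ee'; rewrite (IHg d e e') // (IHh d e e').
- by move=> [cg ch] ee'; rewrite (IHg d e e') // (IHh d e e').
- by move=> c /ext_scons ee'; split=> -[x]; exists x; apply/(IH d.+1 _ _ c (ee' x)).
- by move=> c /ext_scons ee'; split=> H x; apply/(IH d.+1 _ _ c (ee' x)).
Qed.

Lemma sentence_models M f e : sentence f -> sat M e f -> models M f.
Proof. by move=> cf H e'; apply/(sat_closed_ext M f 0 e' e cf). Qed.

Definition embedding {M} {N : structure} (h : M -> N) : Prop :=
  injective h /\ forall R a, interp M R a <-> interp N R (fun k => h (a k)).

Lemma sat_embedding M (N : structure) (h : M -> N) : embedding h ->
  forall f e, qfree f -> sat M e f <-> sat N (fun n => h (e n)) f.
Proof.
move=> [h_inj h_rel].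
elim => [|i j|R a|g IH|g IHg k IHk|g IHg k IHk|g IHg k IHk|g IH|g IH] e //= qf.
- by split => [->|/h_inj].
- by rewrite IH.
- by case: qf => ??; rewrite IHg // IHk.
- by case: qf => ??; rewrite IHg // IHk.
- by case: qf => ??; rewrite IHg // IHk.
Qed.

Lemma sat_iso M (N : structure) (h : M -> N) :
  embedding h -> (forall y, exists x, h x = y) ->
  forall f e, sat M e f <-> sat N (fun n => h (e n)) f.
Proof.
move=> [h_inj h_rel] h_surj.
have h_scons (e : nat -> M) x :
    (fun n => h (scons x e n)) = scons (h x) (fun n => h (e n)).
  by apply: functional_extensionality => -[|n].
elim => [|i j|R a|g IH|g IHg k IHk|g IHg k IHk|g IHg k IHk|g IH|g IH] e //=.
- by split => [->|/h_inj].
- by rewrite IH.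
- by rewrite IHg IHk.
- by rewrite IHg IHk.
- by rewrite IHg IHk.
- split => -[x].
  + by rewrite IH h_scons; exists (h x).
  + by have [x' <-] := h_surj x; rewrite -h_scons -IH; exists x'.
- split => H x.
  + by have [x' <-] := h_surj x; rewrite -h_scons -IH.
  + by rewrite IH h_scons.
Qed.

Lemma models_iso M (N : structure) (h : M -> N) :
  embedding h -> (forall y, exists x, h x = y) -> forall f, models M f -> models N f.
Proof.
move=> h_emb h_surj f Mf e.
have [e' ->] : exists e' : nat -> M, e = (fun n => h (e' n)).
  exists (fun n => epsilon (dom_inhabited M) (fun x => h x = e n)).
  by apply: functional_extensionality => n; rewrite (epsilon_spec _ _ (h_surj (e n))).
by rewrite -(sat_iso _ _ _ h_emb h_surj).
Qed.

Lemma embedding_submodel M A hA : embedding (@proj1_sig M A : submodel M A hA -> M).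
Proof. by split => //; apply: proj1_sig_inj. Qed.

Lemma sat_exs M N : forall (e : nat -> M) f,
  sat M e (exs N f) <-> exists g, sat M (prefix_env N g e) f.
Proof.
elim: N => [|N IH] e f /=.
  by split => [H|[g]]; [exists e|]; rewrite prefix_env0.
split => [[x /IH[g]]|[g]].
- by rewrite prefix_env_scons; eexists; eassumption.
- by rewrite prefix_env_last -prefix_env_scons => H; exists (g N); apply/IH; exists g.
Qed.

Lemma sat_alls M N : forall (e : nat -> M) f,
  sat M e (alls N f) <-> forall g, sat M (prefix_env N g e) f.
Proof.
elim: N => [|N IH] e f /=.
  by split => [H g|/(_ e)]; rewrite prefix_env0.
split => [H g|H x].
- by rewrite prefix_env_last -prefix_env_scons; move/IH: (H (g N)).
- by apply/IH => g; rewrite prefix_env_scons.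
Qed.

Lemma closed_exs N : forall d f, closed_at d (exs N f) <-> closed_at (d + N) f.
Proof. elim: N => [|N IH] d f /=; first by rewrite addn0. by rewrite IH addSnnS. Qed.

Lemma closed_alls N : forall d f, closed_at d (alls N f) <-> closed_at (d + N) f.
Proof. elim: N => [|N IH] d f /=; first by rewrite addn0. by rewrite IH addSnnS. Qed.


Fixpoint fmem (N D : nat) : form :=
  match N with 0 => FFalse | j.+1 => FOr (fmem j D) (FEq 0 (D + j)) end.

Lemma sat_fmem M (e : nat -> M) N D :
  sat M e (fmem N D) <-> exists2 j, j < N & e 0 = e (D + j).
Proof.
elim: N => [|N IH] /=; first by split => // -[].
rewrite IH; split => [[[j jN E]|E]|[j]]; first by exists j => //; apply: ltnW.
- by exists N.
- by rewrite ltnS leq_eqVlt => /orP[/eqP->|jN E]; [right|left; exists j].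
Qed.

Lemma closed_fmem N D m : 0 < m -> D + N <= m -> closed_at m (fmem N D).
Proof. by elim: N => [|N IH] //= m_gt0 le_m; split; [apply: IH|split]; lia. Qed.

Fixpoint relativize (N d : nat) f : form :=
  match f with
  | FFalse => FFalse
  | FEq i j => FEq i j
  | FRel R a => FRel R a
  | FNot g => FNot (relativize N d g)
  | FAnd g h => FAnd (relativize N d g) (relativize N d h)
  | FOr g h => FOr (relativize N d g) (relativize N d h)
  | FImp g h => FImp (relativize N d g) (relativize N d h)
  | FEx g => FEx (FAnd (fmem N d.+1) (relativize N d.+1 g))
  | FAll g => FAll (FImp (fmem N d.+1) (relativize N d.+1 g))
  end.

Lemma closed_relativize N f : forall d,
  closed_at d f -> closed_at (d + N) (relativize N d f).
Proof.
elim: f => [|i j|R a|g IH|g IHg h IHh|g IHg h IHh|g IHg h IHh|g IH|g IH] d //=.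
- by move=> [??]; split; lia.
- by move=> ca k; move: (ca k); lia.
- exact: IH.
- by move=> [??]; split; [apply: IHg|apply: IHh].
- by move=> [??]; split; [apply: IHg|apply: IHh].
- by move=> [??]; split; [apply: IHg|apply: IHh].
- by move=> cg; split; [apply: closed_fmem; lia | rewrite -addSn; apply: IH].
- by move=> cg; split; [apply: closed_fmem; lia | rewrite -addSn; apply: IH].
Qed.

(* At binder depth [d] the variables [d], ..., [d + N - 1] range over the
   universe [A] of the submodel, and [relativize] bounds each quantifier by it. *)
Lemma sat_relativize M N A hA f : forall d (e : nat -> M) (e' : nat -> submodel M A hA),
  closed_at d f -> (forall x, A x <-> exists2 j, j < N & x = e (d + j)) ->
  (forall k, k < d -> proj1_sig (e' k) = e k) ->
  sat M e (relativize N d f) <-> sat (submodel M A hA) e' f.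
Proof.
elim: f => [|i j|R a|g IH|g IHg h IHh|g IHg h IHh|g IHg h IHh|g IH|g IH]
  d e e' /= cf HA e'e.
- by [].
- case: cf => ci cj; rewrite -(e'e _ ci) -(e'e _ cj).
  by split => [/proj1_sig_inj|->].
- by rewrite (functional_extensionality _ (fun k => proj1_sig (e' (a k)))
      (fun k => esym (e'e _ (cf k)))).
- by rewrite (IH d e e').
- by case: cf => ??; rewrite (IHg d e e') // (IHh d e e').
- by case: cf => ??; rewrite (IHg d e e') // (IHh d e e').
- by case: cf => ??; rewrite (IHg d e e') // (IHh d e e').
- have mem x : sat M (scons x e) (fmem N d.+1) <-> A x
    by rewrite sat_fmem HA; split=> -[j jN /= E]; exists j; rewrite // E addSn.
  have IHy (y : submodel M A hA) :
      sat M (scons (proj1_sig y) e) (relativize N d.+1 g) <-> sat _ (scons y e') g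
    by apply: IH => // -[|k] // lt_kd; apply: e'e.
  split => [[x [/mem Ax H]]|[y H]].
  + by exists (exist _ x Ax); apply/IHy.
  + by exists (proj1_sig y); split; [apply/mem/(proj2_sig y) | apply/IHy].
- have mem x : sat M (scons x e) (fmem N d.+1) <-> A x
    by rewrite sat_fmem HA; split=> -[j jN /= E]; exists j; rewrite // E addSn.
  have IHy (y : submodel M A hA) :
      sat M (scons (proj1_sig y) e) (relativize N d.+1 g) <-> sat _ (scons y e') g
    by apply: IH => // -[|k] // lt_kd; apply: e'e.
  split => [H y|H x /mem Ax].
  + by apply/IHy/H/mem/(proj2_sig y).
  + exact/(IHy (exist _ x Ax)).
Qed.

Definition theta_le_form N phi : form := exs N (relativize N 0 phi).

Lemma theta_le_form_sentence N phi : sentence phi -> sentence (theta_le_form N phi).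
Proof.
by move=> cphi; rewrite /sentence /theta_le_form closed_exs; apply: closed_relativize.
Qed.

Lemma sat_theta_le_form M N phi e : sentence phi -> 0 < N ->
  sat M e (theta_le_form N phi) <-> theta_le phi N M.
Proof.
move=> cphi N_gt0; rewrite sat_exs; split=> [[g Hg]|[A [hA [[l [size_l lA]] MA]]]].
  pose A x := exists2 j, j < N & x = prefix_env N g e (0 + j).
  have hA : exists x, A x by exists (prefix_env N g e 0); [exists 0].
  exists A, hA; split; last first.
    by move=> e'; rewrite -(sat_relativize _ N _ _ _ 0 (prefix_env N g e)).
  exists (map (fun j => prefix_env N g e j) (seq 0 N)).
  rewrite length_map length_seq; split=> // _ [j jN ->].
  by apply/in_map_iff; exists j; split => //; apply/in_seq; lia.
have [x0 Ax0] := constructive_indefinite_description _ hA.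
pose g j := if excluded_middle_informative (A (nth j l x0)) then nth j l x0 else x0.
have Ag j : A (g j) by rewrite /g; case: excluded_middle_informative.
exists g; rewrite (sat_relativize _ _ _ _ _ _ _ (fun _ => exist _ x0 Ax0) cphi) //.
move=> x; split=> [Ax|[j jN ->]]; last by rewrite /prefix_env jN.
have [j [lt_jl nth_j]] := In_nth l x x0 (lA x Ax).
have jN : j < N by lia.
exists j => //; rewrite /prefix_env jN /g add0n nth_j.
by case: excluded_middle_informative => // /(_ Ax).
Qed.

Lemma theta_le_mono phi n m M : n <= m -> theta_le phi n M -> theta_le phi m M.
Proof.
move=> le_nm [A [hA [[l [size_l lA]] MA]]]; exists A, hA; split => //.
by exists l; split => //; apply: leq_trans le_nm.
Qed.

Definition submodel_set {M A hA} (B : submodel M A hA -> Prop) : M -> Prop :=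
  fun x => exists p : A x, B (exist _ x p).

Lemma models_submodel_submodel {M A hA B hB f} :
  models (submodel (submodel M A hA) B hB) f ->
  exists hC, models (submodel M (submodel_set B) hC) f.
Proof.
move=> MBf; have hC : exists x, submodel_set B x by have [[x p] q] := hB; exists x, p.
exists hC.
pose h (s : submodel (submodel M A hA) B hB) : submodel M (submodel_set B) hC :=
  let: exist (exist x p) q := s in exist _ x (ex_intro _ p q).
have val_h s : proj1_sig (h s) = proj1_sig (proj1_sig s) by case: s => [[]].
apply: (models_iso _ _ h) MBf.
- split=> [s s' /(f_equal (@proj1_sig _ _))|R a /=].
    by rewrite !val_h => /proj1_sig_inj/proj1_sig_inj.
  by rewrite (functional_extensionality _ _ (fun k => val_h (a k))).
- by move=> [x [p q]]; exists (exist _ (exist _ x p) q).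
Qed.

Lemma theta_le_submodel phi n M A hA :
  theta_le phi n (submodel M A hA) -> theta_le phi n M.
Proof.
move=> [B [hB [[l [size_l lB]] MB]]].
have [hC MC] := models_submodel_submodel MB.
exists (submodel_set B), hC; split => //.
exists (map (@proj1_sig _ _) l); rewrite length_map; split=> // x [p /lB].
exact: in_map (@proj1_sig _ _) l (exist _ x p).
Qed.

Lemma theta_le_of_finite_submodel phi n M A hA :
  card_le M A n -> theta phi (submodel M A hA) -> theta_le phi n M.
Proof.
move=> [l [size_l lA]] [B [hB MB]]; have [hC MC] := models_submodel_submodel MB.
exists (submodel_set B), hC; split => //.
by exists l; split => // x [p _]; apply: lA.
Qed.

Section Ultraproduct.
Variables (I : Type) (U : ultrafilter I) (Ms : I -> structure).

Definition ueq (u v : forall i, Ms i) : Prop := U (fun i => u i = v i).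

Definition ucarrier := {P : (forall i, Ms i) -> Prop | exists u, P = ueq u}.

Definition ucls (u : forall i, Ms i) : ucarrier := exist _ (ueq u) (ex_intro _ u erefl).

Definition urep (q : ucarrier) : forall i, Ms i :=
  proj1_sig (constructive_indefinite_description _ (proj2_sig q)).

Lemma ucls_eq (u v : forall i, Ms i) : ucls u = ucls v <-> ueq u v.
Proof.
split=> [/(f_equal (fun q => proj1_sig q v)) /= ->|uv].
  by apply: (uf_setS U (uf_setT U)).
apply: proj1_sig_inj; apply: functional_extensionality => w /=.
apply: propositional_extensionality.
by split=> H; apply: (uf_setS U (uf_setI U uv H)) => i [-> ->].
Qed.

Lemma urepK q : ucls (urep q) = q.
Proof.
apply: proj1_sig_inj; rewrite /urep /=.
by case: (constructive_indefinite_description _ _).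
Qed.

Lemma uclsK (u : forall i, Ms i) : ueq (urep (ucls u)) u.
Proof. by apply/ucls_eq; rewrite urepK. Qed.

Definition ultraproduct : structure :=
  Structure ucarrier (inhabits (ucls (fun i => point (Ms i))))
    (fun R a => U (fun i => interp (Ms i) R (fun k => urep (a k) i))).

Lemma uf_urep_ucls n (b : 'I_n -> forall i, Ms i) (P : forall i, ('I_n -> Ms i) -> Prop) :
  U (fun i => P i (fun k => urep (ucls (b k)) i)) <-> U (fun i => P i (fun k => b k i)).
Proof.
have Ub : U (fun i => forall k, urep (ucls (b k)) i = b k i).
  by apply: uf_bigI => k; apply: uclsK.
by split=> HP; apply: (uf_setS U (uf_setI U Ub HP)) => i [/functional_extensionality ->].
Qed.

Lemma ucls_scons (w : forall i, Ms i) (E : forall i, nat -> Ms i) :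
  scons (ucls w) (fun n => ucls (fun i => E i n)) =
  (fun n => ucls (fun i => scons (w i) (E i) n)).
Proof. by apply: functional_extensionality => -[|n]. Qed.

Theorem los f : forall E : forall i, nat -> Ms i,
  sat ultraproduct (fun n => ucls (fun i => E i n)) f <-> U (fun i => sat (Ms i) (E i) f).
Proof.
elim: f => [|x y|R a|g IH|g IHg h IHh|g IHg h IHh|g IHg h IHh|g IH|g IH] E /=.
- by split=> //; apply: uf_set0.
- exact: ucls_eq.
- exact (uf_urep_ucls _ (fun k i => E i (a k)) (fun i => interp (Ms i) R)).
- by rewrite IH uf_setC.
- rewrite IHg IHh; split=> [[Ug Uh]|Ugh]; first exact (uf_setI U Ug Uh).
  by split; apply: (uf_setS U Ugh) => i [].
- rewrite IHg IHh; split=> [[Ug|Uh]|Ugh].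
  + by apply: (uf_setS U Ug) => i; left.
  + by apply: (uf_setS U Uh) => i; right.
  + case: (uf_setVC U (fun i => sat (Ms i) (E i) g)) => [|Ung]; first by left.
    case: (uf_setVC U (fun i => sat (Ms i) (E i) h)) => [|Unh]; first by right.
    case: (uf_set0 U); apply: (uf_setS U (uf_setI U Ugh (uf_setI U Ung Unh))).
    by move=> i [[Gi|Hi] [nGi nHi]]; [apply: nGi | apply: nHi].
- rewrite IHg IHh; split=> [Ugh|Ugh Ug].
  + case: (uf_setVC U (fun i => sat (Ms i) (E i) g)) => [/Ugh|Ung].
      by move=> Uh; apply: (uf_setS U Uh) => i.
    by apply: (uf_setS U Ung) => i.
  + by apply: (uf_setS U (uf_setI U Ugh Ug)) => i [/[apply]].
- split=> [[q]|Ug].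
    rewrite -(urepK q) ucls_scons IH => Ug.
    by apply: (uf_setS U Ug) => i; exists (urep q i).
  pose w i := epsilon (dom_inhabited (Ms i)) (fun x => sat (Ms i) (scons x (E i)) g).
  exists (ucls w); rewrite ucls_scons IH; apply: (uf_setS U Ug) => i.
  exact: epsilon_spec.
- split=> [Ug|Ug q]; last first.
    by rewrite -(urepK q) ucls_scons IH; apply: (uf_setS U Ug).
  apply: NNPP => nUg; rewrite -uf_setC in nUg.
  pose w i := epsilon (dom_inhabited (Ms i)) (fun x => ~ sat (Ms i) (scons x (E i)) g).
  move: (Ug (ucls w)); rewrite ucls_scons IH => Uw.
  apply: (uf_set0 U); apply: (uf_setS U (uf_setI U Uw nUg)) => i [wg]; apply=> x.
  apply: NNPP => nx.
  exact: (epsilon_spec _ (fun x => ~ sat (Ms i) (scons x (E i)) g) (ex_intro _ x nx) wg).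
Qed.

Corollary los_sentence f : sentence f ->
  models ultraproduct f <-> U (fun i => models (Ms i) f).
Proof.
move=> cf; have los_point := los f (fun i _ => point (Ms i)).
split=> [/(_ (fun _ => ucls (fun i => point (Ms i))))/los_point Uf|Uf].
  by apply: (uf_setS U Uf) => i; apply: sentence_models.
by apply/sentence_models/los_point/(uf_setS U Uf).
Qed.

End Ultraproduct.
Arguments ultraproduct {I} U Ms.
Arguments ucls {I} U {Ms}.
Arguments ucls_eq {I U Ms u v}.
Arguments uf_urep_ucls {I} U {Ms n}.
Arguments los_sentence {I} U Ms {f}.

Lemma model_of_T_submodel phi M A hA :
  model_of_T phi M -> model_of_T phi (submodel M A hA).
Proof. by move=> TM n /theta_le_submodel /TM. Qed.

Lemma theta_of_embedding M (N : structure) (h : M -> N) phi :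
  embedding h -> models M phi -> theta phi N.
Proof.
move=> [h_inj h_rel] Mphi.
pose B y := exists x, y = h x.
have hB : exists y, B y by exists (h (point M)), (point M).
pose h' x : submodel N B hB := exist B (h x) (ex_intro _ x erefl).
exists B, hB; apply: (models_iso _ _ h') Mphi.
- by split=> [x x' /(f_equal (@proj1_sig _ _)) /h_inj|R a]; last exact: h_rel.
- by move=> [y [x yx]]; exists x; apply: proj1_sig_inj.
Qed.

Lemma sigma02_small_submodel M psi : sentence psi -> sigma02 psi -> models M psi ->
  exists n A hA, card_le M A n /\ models (submodel M A hA) psi.
Proof.
move=> cpsi [k [l [g [qg Epsi]]]]; subst psi.
move=> /(_ (fun _ => point M)) /sat_exs[w /sat_alls Mg].
have cg : closed_at (k + l) g by move: cpsi; rewrite /sentence closed_exs closed_alls.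
pose w' j := if j < k then w j else point M.
pose A x := x = point M \/ exists j, x = w' j.
have hA : exists x, A x by exists (point M); left.
exists k.+1, A, hA; split.
  exists (point M :: map w' (seq 0 k)); rewrite /= length_map length_seq.
  split=> // x [->|[j ->]]; first by left.
  case: (ltnP j k) => [jk|kj]; last by rewrite /w' ltnNge kj; left.
  by right; apply/in_map_iff; exists j; split => //; apply/in_seq; lia.
pose W j : submodel M A hA := exist _ (w' j) (or_intror (ex_intro _ j erefl)).
pose P : submodel M A hA := exist _ (point M) (or_introl erefl).
apply: (sentence_models _ _ (fun _ => P) cpsi).
apply/sat_exs; exists W; apply/sat_alls => y.
rewrite (sat_embedding _ _ _ (embedding_submodel _ _ _)) //.
move: (Mg (fun n => proj1_sig (y n))).
apply: (iffLR (sat_closed_ext _ _ _ _ _ cg _)) => n lt_n.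
rewrite /prefix_env; case: ifP => // /negbT; rewrite -leqNgt => le_ln.
by rewrite (_ : n - l < k) /= ?/w' ?ifT //; lia.
Qed.

Lemma sigma02_equiv_excludes_T phi psi : sentence psi -> sigma02 psi ->
  (forall M, model_of_T phi M -> (models M phi <-> models M psi)) ->
  forall M, model_of_T phi M -> ~ models M phi.
Proof.
move=> cpsi spsi phi_psi M TM /(phi_psi M TM).1 Mpsi.
have [n [A [hA [cardA MApsi]]]] := sigma02_small_submodel _ _ cpsi spsi Mpsi.
have MAphi := (phi_psi _ (model_of_T_submodel _ _ _ hA TM)).2 MApsi.
apply: (TM n (theta_le_of_finite_submodel _ _ _ _ hA cardA _)).
by apply: (theta_of_embedding _ _ id _ _ MAphi); split.
Qed.

Lemma embedding_into_ultraproduct_of_finite_submodels M :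
  exists (I : Type) (U : ultrafilter I) (A : I -> M -> Prop)
         (hA : forall i, exists x, A i x),
    (forall i, exists n, card_le M (A i) n) /\
    exists h : M -> ultraproduct U (fun i => submodel M (A i) (hA i)), embedding h.
Proof.
pose A (l : list M) x := x = point M \/ In x l.
have hA l : exists x, A l x by exists (point M); left.
have [U UA] : exists U : ultrafilter (list M), forall x, U (fun l => A l x).
  have [U U_in] := ultrafilter_finite_subsets M.
  by exists U => x; apply: (uf_setS U (U_in x)) => l; right.
exists (list M), U, A, hA; split.
  move=> l; exists (length (point M :: l)), (point M :: l).
  by split=> // x [->|]; [left|right].
pose dx x l : submodel M (A l) (hA l) :=
  if excluded_middle_informative (A l x) is left Alx then exist _ x Alx
  else exist _ (point M) (or_introl erefl).
have val_dx x l : A l x -> proj1_sig (dx x l) = x.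
  by rewrite /dx; case: excluded_middle_informative.
exists (fun x => ucls U (dx x)); split=> [x y /ucls_eq Uxy|R a].
  have [l [dxy [Ax Ay]]] := uf_nonempty U (uf_setI U Uxy (uf_setI U (UA x) (UA y))).
  by rewrite -(val_dx _ _ Ax) -(val_dx _ _ Ay) dxy.
rewrite /= (uf_urep_ucls U (fun k => dx (a k))
  (fun l => interp (submodel M (A l) (hA l)) R)) /=.
have Ua : U (fun l => forall k, A l (a k)) by apply: uf_bigI => k; apply: UA.
rewrite -[interp M R a]uf_const.
split=> Ha; apply: (uf_setS U (uf_setI U Ua Ha)) => l [Aa].
all: by rewrite (functional_extensionality _ _ (fun k => val_dx _ _ (Aa k))).
Qed.

Lemma expressible_theta_excludes_T phi : expressible (theta phi) ->
  forall M, model_of_T phi M -> ~ models M phi.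
Proof.
move=> [chi [cchi chi_theta]] M TM Mphi.
have [I [U [A [hA [cardA [h h_emb]]]]]] :=
  embedding_into_ultraproduct_of_finite_submodels M.
have /chi_theta /(los_sentence _ _ cchi) /uf_nonempty [i /chi_theta thA] :=
  theta_of_embedding _ _ h _ h_emb Mphi.
have [n cardn] := cardA i.
exact: TM n (theta_le_of_finite_submodel _ _ _ _ _ cardn thA).
Qed.

Lemma theta_le_uniform_bound phi : sentence phi ->
  (forall M, model_of_T phi M -> ~ models M phi) ->
  exists N, 0 < N /\ forall M, models M phi -> theta_le phi N M.
Proof.
move=> cphi noT; apply: NNPP => no_bound.
have counter N : exists M, models M phi /\ ~ theta_le phi N.+1 M.
  apply: NNPP => H; apply: no_bound; exists N.+1; split=> // M Mphi.
  by apply: NNPP => nMphi; apply: H; exists M.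
pose Ms N := proj1_sig (constructive_indefinite_description _ (counter N)).
have [Ms_phi Ms_small] : (forall N, models (Ms N) phi) /\
    (forall N, ~ theta_le phi N.+1 (Ms N)).
  by split=> N; case: (proj2_sig (constructive_indefinite_description _ (counter N))).
have [U Ufinal] := ultrafilter_final_segments.
have cthN n := theta_le_form_sentence n.+1 phi cphi.
apply: (noT (ultraproduct U Ms)); last first.
  by apply/(los_sentence U Ms cphi)/(uf_setS U (uf_setT U)).
move=> n /(theta_le_mono _ _ _ _ (leqnSn n)) thn.
have /(los_sentence U Ms (cthN n)) Un :
    models (ultraproduct U Ms) (theta_le_form n.+1 phi).
  by move=> e; apply/sat_theta_le_form.
have [i [/(_ (fun _ => point _)) /sat_theta_le_form th_i le_ni]] :=
  uf_nonempty U (uf_setI U Un (Ufinal n)).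
by apply: (Ms_small i); apply: (theta_le_mono _ _ _ _ _ (th_i cphi isT)); rewrite ltnS.
Qed.

Lemma expressible_theta_of_bound phi N : sentence phi -> 0 < N ->
  (forall M, models M phi -> theta_le phi N M) -> expressible (theta phi).
Proof.
move=> cphi N_gt0 bound; exists (theta_le_form N phi).
split=> [|M]; first exact: theta_le_form_sentence.
split=> [[A [hA MA]] e|/(_ (fun _ => point M))].
  by apply/sat_theta_le_form => //; apply: theta_le_submodel (bound _ MA).
by move/sat_theta_le_form => /(_ cphi N_gt0) [A [hA [_ MA]]]; exists A, hA.
Qed.

End Semantics.

Theorem theorem1 (Rel : Type) (ar : Rel -> nat) (phi : form ar)
  (hphi : sentence phi) :
  expressible (theta phi) <->
  exists psi : form ar, sentence psi /\ sigma02 psi /\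
    forall M : structure ar, model_of_T phi M ->
      (models M phi <-> models M psi).
Proof.
split=> [expr|[psi [cpsi [spsi phi_psi]]]].
  exists FFalse; split=> //; split; first by exists 0, 0, FFalse.
  move=> M TM; split=> [/(expressible_theta_excludes_T _ expr _ TM) //|].
  by move/(_ (fun _ => point M)).
have [N [N_gt0 bound]] :=
  theta_le_uniform_bound _ hphi (sigma02_equiv_excludes_T _ _ cpsi spsi phi_psi).
exact: expressible_theta_of_bound _ _ hphi N_gt0 bound.
Qed.
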